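(* Let $G$ be a finite group with $\pi_e(G)\subseteq\{1,2,3,4,6\}$ that has precisely three cyclic subgroups of order $6$. If there exist two cyclic subgroups of order $6$ of $G$ whose intersection has order $3$, then the intersection of any two distinct cyclic subgroups of order $6$ of $G$ has order $3$.
   Context: For a finite group $G$, $\pi_e(G)$ denotes the set of orders of elements of $G$. *)

From mathcomp Require Import all_boot all_fingroup.
Set Implicit Arguments. Unset Strict Implicit. Unset Printing Implicit Defensive.
Local Open Scope group_scope.

Definition elt_orders (gT : finGroupType) (G : {set gT}) : pred nat :=
  fun n => [exists x in G, #[x] == n].

Definition cyc6 (gT : finGroupType) (G : {set gT}) : {set {set gT}} :=
  [set (<[x]> : {set gT}) | x in G & #[x] == 6%N].

From mathcomp Require Import all_boot all_fingroup all_solvable.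
Set Implicit Arguments.
Unset Strict Implicit.
Unset Printing Implicit Defensive.

Local Open Scope group_scope.

(* Let C, D be cyclic subgroups of order 6 meeting in <[a]> of order 3.  Then
   C = <[a t1]> and D = <[a t2]> for distinct involutions t1, t2 centralising
   a.  Two distinct involutions of a group always produce a third one (their
   product if they commute, a conjugate of one by the other otherwise), so
   'C_G[a] contains three involutions t, and the <[a t]> are three distinct
   cyclic subgroups of order 6 containing a.  As there are only three such
   subgroups in G, all of them contain a, so any two distinct ones meet in a
   subgroup of order 3 (it contains <[a]> and is proper in a group of
   order 6). *)

Section Involutions.
Variable gT : finGroupType.
Implicit Types t : gT.

Definition involutions (A : {set gT}) : {set gT} := [set t in A | #[t] == 2].

Lemma invg_order2 t : #[t] = 2 -> t^-1 = t.
Proof. by move=> ot; rewrite invg_expg ot expg1. Qed.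

Lemma order2_nt t : #[t] = 2 -> t != 1.
Proof. by move=> ot; rewrite -order_eq1 ot. Qed.

Lemma order2P t : t ^+ 2 = 1 -> t != 1 -> #[t] = 2.
Proof. by move=> t2 nt; apply/prime_nt_dvdP; rewrite ?order_eq1 ?order_dvdn ?t2. Qed.

Lemma exists_third_involution (H : {group gT}) t1 t2 :
    t1 \in H -> t2 \in H -> #[t1] = 2 -> #[t2] = 2 -> t1 != t2 ->
  exists2 t3, t3 \in H & [/\ #[t3] = 2, t3 != t1 & t3 != t2].
Proof.
move=> t1H t2H ot1 ot2 t12.
have [/conjg_fixP/commgP ct12 | nct12] := eqVneq (t1 ^ t2) t1.
  exists (t1 * t2); first exact: groupM.
  split.
  - apply: order2P; first by rewrite expgMn // -{1}ot1 -ot2 !expg_order mulg1.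
    by rewrite -eq_invg_mul invg_order2.
  - by rewrite -{2}[t1]mulg1 (inj_eq (mulgI t1)) order2_nt.
  - by rewrite -{2}[t2]mul1g (inj_eq (mulIg t2)) order2_nt.
exists (t1 ^ t2); first exact: groupJ.
split=> //; first by rewrite orderJ.
apply: contraNneq t12 => t1J; apply/eqP/(conjg_inj t2).
by rewrite t1J conjgE mulKg.
Qed.

Lemma three_involutions (H : {group gT}) t1 t2 :
    t1 \in H -> t2 \in H -> #[t1] = 2 -> #[t2] = 2 -> t1 != t2 ->
  3 <= #|involutions H|.
Proof.
move=> t1H t2H ot1 ot2 t12.
have [t3 t3H [ot3 t31 t32]] := exists_third_involution t1H t2H ot1 ot2 t12.
have <- : #|[set t1; t2; t3]| = 3.
  by rewrite -setUA cardsU1 cards2 !inE negb_or t12 eq_sym t31 eq_sym t32.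
apply/subset_leq_card/subsetP=> t; rewrite !inE.
by case/orP=> [/orP[]|] /eqP->; rewrite ?t1H ?t2H ?t3H ?ot1 ?ot2 ?ot3.
Qed.

End Involutions.

Section OrderSix.
Variable gT : finGroupType.
Implicit Types a t s z : gT.

Section CommutingOrderThreeTwo.
Variables a t : gT.
Hypotheses (cat : commute a t) (oa : #[a] = 3) (ot : #[t] = 2).

Lemma order_mul32 : #[a * t] = 6.
Proof. by rewrite orderM // oa ot. Qed.

Lemma expg_mul32 k : (a * t) ^+ k = a ^+ (k %% 3) * t ^+ (k %% 2).
Proof. by rewrite expgMn // -oa -ot !expg_mod_order. Qed.

Lemma expg3_mul32 : (a * t) ^+ 3 = t.
Proof. by rewrite expg_mul32 expg0 mul1g. Qed.

Lemma mem_cycle_mul32 : a \in <[a * t]>.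
Proof.
have at4 : (a * t) ^+ 4 = a by rewrite expg_mul32 expg0 mulg1.
by rewrite -{1}at4 mem_cycle.
Qed.

End CommutingOrderThreeTwo.

Lemma cycle_mul32_inj a t s :
    commute a t -> commute a s -> #[a] = 3 -> #[t] = 2 -> #[s] = 2 ->
  <[a * t]> = <[a * s]> -> t = s.
Proof.
move=> cat cas oa ot os Ets.
have /cycleP[k ask] : a * s \in <[a * t]> by rewrite Ets cycle_id.
have : s = t ^+ k.
  by rewrite -(expg3_mul32 cas oa os) ask -expgM mulnC expgM expg3_mul32.
rewrite -expg_mod_order ot modn2; case: (odd k) => [->|s1]; first exact: expg1.
by move: (order2_nt os); rewrite s1 eqxx.
Qed.

Lemma cycle_order6_decomp z a : #[z] = 6 -> a \in <[z]> -> #[a] = 3 ->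
  [/\ commute a (z ^+ 3), #[z ^+ 3] = 2 & <[z]> = <[a * z ^+ 3]>].
Proof.
move=> oz az oa.
have ot : #[z ^+ 3] = 2 by rewrite orderXdiv oz.
have cat : commute a (z ^+ 3) by case/cycleP: az => k ->; apply: commuteX2.
split=> //; apply/esym/eqP; rewrite eqEcard cycle_subG groupM ?mem_cycle //=.
by rewrite -!orderE order_mul32 ?oz.
Qed.

Lemma card_setI_order6 (A B : {group gT}) a :
    #|A| = 6 -> #|B| = 6 -> A :!=: B -> a \in A :&: B -> #[a] = 3 ->
  #|A :&: B| = 3.
Proof.
move=> oA oB neAB aAB oa.
have dvd6 : #|A :&: B| %| 6 by rewrite -oA cardSg ?subsetIl.
have dvd3 : 3 %| #|A :&: B| by rewrite -oa orderE cardSg ?cycle_subG.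
have ne6 : #|A :&: B| != 6.
  apply: contraNneq neAB => oAB.
  have /eqP <- : A :&: B == A by rewrite eqEcard subsetIl oA oAB.
  by rewrite eqEcard subsetIr oB oAB.
move: dvd6 dvd3 ne6; case: #|_| => [|[|[|[|[|[|[|k]]]]]]] //.
Qed.

Lemma cyc6P (G : {group gT}) (C : {set gT}) :
  reflect (exists z, [/\ z \in G, #[z] = 6 & C = <[z]>]) (C \in cyc6 G).
Proof.
apply: (iffP imsetP) => [[z /setIdP[zG /eqP oz] ->] | [z [zG oz ->]]].
  by exists z.
by exists z; rewrite // inE zG oz.
Qed.

Lemma card_involutions_cent_le_cyc6 (G : {group gT}) a : a \in G -> #[a] = 3 ->
  #|involutions 'C_G[a]| <= #|[set C in cyc6 G | a \in C]|.
Proof.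
move=> aG oa; rewrite -(@card_in_imset _ _ (fun t => <[a * t]>)).
  apply/subset_leq_card/subsetP=> C /imsetP[t].
  case/setIdP=> /setIP[tG /cent1P/commute_sym cat] /eqP ot ->.
  rewrite inE mem_cycle_mul32 // andbT; apply/cyc6P.
  by exists (a * t); rewrite groupM ?order_mul32.
move=> t s /setIdP[/setIP[_ /cent1P/commute_sym cat] /eqP ot].
case/setIdP=> /setIP[_ /cent1P/commute_sym cas] /eqP os.
exact: cycle_mul32_inj.
Qed.

End OrderSix.

Theorem lemma3p2 (gT : finGroupType) (G : {group gT}) :
  (forall n, elt_orders G n -> n \in [:: 1; 2; 3; 4; 6]%N) ->
  #|cyc6 G| = 3%N ->
  (exists A B, [/\ A \in cyc6 G, B \in cyc6 G & #|A :&: B| = 3%N]) ->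
  forall A B, A \in cyc6 G -> B \in cyc6 G -> A != B -> #|A :&: B| = 3%N.
Proof.
move=> _ card_cyc6 [_ [_ [/cyc6P[x [xG ox ->]] /cyc6P[y [yG oy ->]] oxy]]].
move=> A B AG BG neAB.
pose a := x ^+ 2.
have oa : #[a] = 3 by rewrite orderXdiv ox.
have /setIP[ax ay] : a \in <[x]> :&: <[y]>.
  have /eqP -> : (<[x]> :&: <[y]>)%G == <[a]>%G :> {set gT}.
    rewrite (eq_subG_cyclic (cycle_cyclic x)) ?subsetIl ?cycle_subG ?mem_cycle //.
    by rewrite -orderE oa oxy.
  exact: cycle_id.
have [cat1 ot1 Ex] := cycle_order6_decomp ox ax oa.
have [cat2 ot2 Ey] := cycle_order6_decomp oy ay oa.
have t12 : x ^+ 3 != y ^+ 3.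
  by apply/eqP=> t12; move: oxy; rewrite Ex Ey t12 setIid -orderE order_mul32.
have tC z : z \in G -> commute a (z ^+ 3) -> z ^+ 3 \in 'C_G[a].
  by move=> zG caz; rewrite inE groupX //; apply/cent1P/commute_sym.
have through_a : [set C in cyc6 G | a \in C] = cyc6 G.
  apply/eqP; rewrite eqEcard card_cyc6; apply/andP; split.
    by apply/subsetP=> C /setIdP[].
  apply: leq_trans (card_involutions_cent_le_cyc6 (groupX 2 xG) oa).
  exact: three_involutions (tC x xG cat1) (tC y yG cat2) ot1 ot2 t12.
move: AG BG neAB; rewrite -through_a.
case/setIdP=> /cyc6P[u [_ ou ->]] au /setIdP[/cyc6P[v [_ ov ->]] av] neuv.
by apply: (card_setI_order6 _ _ neuv _ oa); rewrite -?orderE ?inE ?au ?av.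
Qed.
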